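(* Let $\delta\in(0,1)$ and $0\le p<\delta$. Then for every $n\ge1$ and every nonempty $\mathcal{A}_n\subseteq\{+,-\}^n$, the frame erasure rate satisfies $P_e(\mathcal{A}_n)>p$, whereas uncoded transmission ($n=0$) has frame erasure rate $p$. Consequently, for any finite set $\mathcal N=\{0,1,\dots,n_{\max}\}$ and any choice of nonempty information sets, $\arg\min_{n\in\mathcal N}P_e(\mathcal A_n)=0$.
   Context: Random erasure-indicator vectors $\mathbf{E}_{s,\delta}=(E^{(\mathbf{u})}_{s,\delta})_{\mathbf{u}\in\{+,-\}^s}$ are defined recursively: $E^{(\emptyset)}_{0,\delta}\sim$ Bernoulli$(p)$; given $\mathbf{E}_{s-1,\delta}$, take two independent copies $\mathbf{E}',\mathbf{E}''$ and i.i.d. Bernoulli$(\delta)$ variables $\Delta^{(\mathbf{u})}_s$ independent of them; for $\mathbf{t}\in\{+,-\}^{s-1}$ with $A=E'^{(\mathbf{t})}+E''^{(\mathbf{t})}-E'^{(\mathbf{t})}E''^{(\mathbf{t})}$ and $B=E'^{(\mathbf{t})}E''^{(\mathbf{t})}$, set $E^{(\mathbf{t}-)}_{s,\delta}=A+(1-A)\Delta^{(\mathbf{t}-)}_s$ and $E^{(\mathbf{t}+)}_{s,\delta}=B+(1-B)\Delta^{(\mathbf{t}+)}_s$. For a polar code of length $2^n$ over BEC$(p)$ with information set $\mathcal{A}_n\subseteq\{+,-\}^n$, decoded by a faulty SC decoder whose internal messages are independently erased with probability $\delta$, the frame erasure rate is $P_e(\mathcal{A}_n)=\Pr\big(\exists\,\mathbf{s}\in\mathcal{A}_n: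 E^{(\mathbf{s})}_{n,\delta}=1\big)$; for $n=0$ (uncoded transmission) it equals $p$. *)

From HB Require Import structures.
From mathcomp Require Import all_boot all_order all_algebra.
Set Implicit Arguments. Unset Strict Implicit. Unset Printing Implicit Defensive.
Import Order.TTheory GRing.Theory Num.Theory.
Local Open Scope ring_scope.

(* An index u in {+,-}^s : a function 'I_s -> bool, true = '+', false = '-'.
   Position s-1 (ord_max) is the last appended sign. *)
Definition Idx (s : nat) := {ffun 'I_s -> bool}.
(* A realisation of the erasure-indicator vector E_s = (E^(u))_{u in {+,-}^s}. *)
Definition Vec (s : nat) := {ffun Idx s -> bool}.

Definition prefix (s : nat) (u : Idx s.+1) : Idx s :=
  [ffun i : 'I_s => u (widen_ord (leqnSn s) i)].

(* One recursion step: from the two copies E', E'' and the Bernoulli(delta)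
   variables Delta_s, build E_s.  With 0/1 variables,
   A + (1-A) Delta = A || Delta, A = E' || E'', B = E' && E''. *)
Definition step (s : nat) (e' e'' : Vec s) (d : Vec s.+1) : Vec s.+1 :=
  [ffun u : Idx s.+1 =>
     let t := prefix u in
     if u ord_max then (e' t && e'' t) || d u
     else (e' t || e'' t) || d u].

Definition bern (R : nzRingType) (q : R) (b : bool) : R := if b then q else 1 - q.

Fixpoint pmf (R : nzRingType) (p delta : R) (s : nat) : Vec s -> R :=
  match s return Vec s -> R with
  | 0 => fun e => \prod_(u : Idx 0) bern p (e u)
  | s'.+1 => fun e =>
      \sum_(e' : Vec s') \sum_(e'' : Vec s') \sum_(d : Vec s'.+1)
        (if e == step e' e'' d then
           pmf p delta e' * pmf p delta e'' * \prod_(u : Idx s'.+1) bern delta (d u)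
         else 0)
  end.

Definition Pe (R : nzRingType) (p delta : R) (n : nat) (A : {set Idx n}) : R :=
  \sum_(e : Vec n | [exists u in A, e u]) pmf p delta e.

From HB Require Import structures.
From mathcomp Require Import all_boot all_order all_algebra.
Import Order.TTheory GRing.Theory Num.Theory.
Local Open Scope ring_scope.
Set Implicit Arguments. Unset Strict Implicit.

(* For n >= 1 every bit of E_n is erased as soon as its own internal erasure
   Delta_n is, whatever E' and E'' are.  Since Delta_n is independent of them,
   any nonempty information set is erased with probability at least delta > p,
   while with n = 0 the single bit is erased with probability exactly p. *)

Lemma step_erased s (e' e'' : Vec s) (d : Vec s.+1) (u : Idx s.+1) :
  d u -> step e' e'' d u.
Proof. by move=> du; rewrite ffunE /= du; case: ifP; rewrite !orbT. Qed.

Lemma Idx0_eq (u v : Idx 0) : u = v.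
Proof. by apply/ffunP => -[]. Qed.

Section ProductBernoulli.
Variables (R : comNzRingType) (I : finType) (q : R).

Lemma sum_prod_bern : \sum_(d : {ffun I -> bool}) \prod_u bern q (d u) = 1.
Proof.
rewrite -(bigA_distr_bigA (fun (u : I) b => bern q b)) big1 // => i _.
by rewrite big_bool /= /bern addrC subrK.
Qed.

Lemma sum_prod_bern_at (u0 : I) :
  \sum_(d : {ffun I -> bool} | d u0) \prod_u bern q (d u) = q.
Proof.
pose F u (b : bool) := if u == u0 then (if b then q else 0) else bern q b.
rewrite big_mkcond (eq_bigr (fun d : {ffun I -> bool} => \prod_u F u (d u))).
  rewrite -(bigA_distr_bigA F) /F (bigD1 u0) //= big_bool eqxx /= addr0.
  rewrite big1 ?mulr1 // => i /negbTE ->.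
  by rewrite big_bool /= /bern addrC subrK.
move=> d _; rewrite /F (bigD1 u0) //= [in RHS](bigD1 u0) //= eqxx.
rewrite [in RHS](eq_bigr (fun u => bern q (d u))) => [|i /negbTE -> //].
by case: (d u0); rewrite ?mul0r.
Qed.

End ProductBernoulli.

Section PmfLaws.
Variables (R : comNzRingType) (p delta : R).

Lemma sum_pmfS s (P : pred (Vec s.+1)) :
  \sum_(e : Vec s.+1 | P e) pmf p delta e =
  \sum_(e' : Vec s) \sum_(e'' : Vec s) \sum_(d : Vec s.+1 | P (step e' e'' d))
    pmf p delta e' * pmf p delta e'' * \prod_u bern delta (d u).
Proof.
pose w (e' e'' : Vec s) (d : Vec s.+1) :=
  pmf p delta e' * pmf p delta e'' * \prod_u bern delta (d u).
have unfold_pmf (e : Vec s.+1) : (if P e then pmf p delta e else 0) =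
    \sum_(e' : Vec s) \sum_(e'' : Vec s) \sum_(d : Vec s.+1)
      (if e == step e' e'' d then (if P e then w e' e'' d else 0) else 0).
  case: ifP => _ /=; first by do 3 (apply: eq_bigr => ? _).
  by rewrite big1 // => ? _; rewrite big1 // => ? _; rewrite big1 // => ? _; case: ifP.
rewrite big_mkcond (eq_bigr _ (fun e _ => unfold_pmf e)) /=.
rewrite exchange_big; apply: eq_bigr => e' _.
rewrite exchange_big; apply: eq_bigr => e'' _.
rewrite exchange_big [RHS]big_mkcond; apply: eq_bigr => d _.
by rewrite (bigD1 (step e' e'' d)) //= eqxx big1 ?addr0 // => e /negbTE ->.
Qed.

Lemma sum_pmf s : \sum_(e : Vec s) pmf p delta e = 1.
Proof.
elim: s => [|s IH]; first exact: sum_prod_bern.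
rewrite (sum_pmfS xpredT) /= -[RHS]IH; apply: eq_bigr => e' _.
rewrite -[RHS]mulr1 -{2}IH mulr_sumr; apply: eq_bigr => e'' _.
by rewrite -mulr_sumr sum_prod_bern mulr1.
Qed.

Lemma sum_step_weight_at s (u0 : Idx s.+1) :
  \sum_(e' : Vec s) \sum_(e'' : Vec s) \sum_(d : Vec s.+1 | d u0)
    pmf p delta e' * pmf p delta e'' * \prod_u bern delta (d u) = delta.
Proof.
under eq_bigr do under eq_bigr do rewrite -mulr_sumr sum_prod_bern_at.
rewrite -[RHS]mul1r -{1}(sum_pmf s) mulr_suml; apply: eq_bigr => e' _.
by rewrite -mulr_suml -mulr_sumr sum_pmf mulr1.
Qed.

Lemma Pe_idx0 (A : {set Idx 0}) : A != set0 -> Pe p delta A = p.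
Proof.
case/set0Pn=> u0 Au0; rewrite /Pe -[RHS](sum_prod_bern_at p u0); apply: eq_big => // e.
apply/existsP/idP => [[u /andP[_]]|eu0]; first by rewrite (Idx0_eq u u0).
by exists u0; rewrite Au0.
Qed.

End PmfLaws.

Section Positivity.
Variables (R : numDomainType) (p delta : R).
Hypotheses (hp : 0 <= p <= 1) (hd : 0 <= delta <= 1).

Lemma bern_ge0 (q : R) b : 0 <= q <= 1 -> 0 <= bern q b.
Proof. by case/andP=> q0 q1; case: b => //=; rewrite subr_ge0. Qed.

Lemma pmf_ge0 s (e : Vec s) : 0 <= pmf p delta e.
Proof.
elim: s e => [|s IH] e /=; first by apply: prodr_ge0 => u _; exact: bern_ge0.
do 3 (apply: sumr_ge0 => ? _); case: ifP => // _.
by rewrite !mulr_ge0 //; apply: prodr_ge0 => u _; exact: bern_ge0.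
Qed.

Lemma Pe_ge_delta s (A : {set Idx s.+1}) : A != set0 -> delta <= Pe p delta A.
Proof.
case/set0Pn=> u0 Au0; rewrite /Pe sum_pmfS -[leLHS](sum_step_weight_at p delta u0).
apply: ler_sum => e' _; apply: ler_sum => e'' _.
rewrite [leLHS]big_mkcond [leRHS]big_mkcond.
apply: ler_sum => d _; case: ifP => [du0|_].
  suff hA : [exists u in A, step e' e'' d u] by rewrite hA.
  by apply/existsP; exists u0; rewrite Au0 step_erased.
case: ifP => // _; rewrite !mulr_ge0 ?pmf_ge0 //.
by apply: prodr_ge0 => u _; exact: bern_ge0.
Qed.

End Positivity.

Theorem proposition7 (R : realFieldType) (p delta : R)
  (hd0 : 0 < delta) (hd1 : delta < 1) (hp0 : 0 <= p) (hpd : p < delta) :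
  (* coded transmission, n >= 1 *)
  (forall (n : nat) (A : {set Idx n}), (0 < n)%N -> A != set0 ->
      p < Pe p delta A)
  /\ (* uncoded transmission, n = 0 (the only nonempty A_0 is the full set) *)
  Pe p delta [set: Idx 0] = p
  /\ (* consequence: argmin over N = {0,...,nmax} is exactly {0} *)
  (forall (nmax : nat) (A : forall n : nat, {set Idx n}),
      (forall n, A n != set0) ->
      forall n : nat, (n <= nmax)%N ->
        Pe p delta (A 0%N) <= Pe p delta (A n)
        /\ ((0 < n)%N -> Pe p delta (A 0%N) < Pe p delta (A n))).
Proof.
have hp : 0 <= p <= 1 by rewrite hp0 ltW // (lt_trans hpd hd1).
have hd : 0 <= delta <= 1 by rewrite !ltW.
have coded n (A : {set Idx n}) : (0 < n)%N -> A != set0 -> p < Pe p delta A.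
  by case: n A => // n A _ /(Pe_ge_delta hp hd); exact: lt_le_trans.
have setT0 : [set: Idx 0] != set0 by apply/set0Pn; exists [ffun=> false].
split=> //; split; first exact: Pe_idx0.
move=> nmax A An n _; rewrite Pe_idx0 //.
case: n => [|n]; first by rewrite Pe_idx0.
by have lt_pPe := coded _ (A n.+1) isT (An _); rewrite ltW.
Qed.
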